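(* Under the hypotheses that $\mathcal M$ is unichain and indexable and $\widehat{\mathcal M}$ has the same rewards and same support as $\mathcal M$ and satisfies Assumption (A): for every compact interval $[a,b]\subset\mathbb R$ there exists a constant $c_\lambda$ depending only on $\mathcal M$, $a$ and $b$ such that for every state $s$ and every policy $\pi\subseteq\mathcal S$, $$\max_{\lambda\in[a,b]}|\alpha^\pi_s(\lambda)-\hat\alpha^\pi_s(\lambda)|\le c_\lambda\|\mathcal M-\widehat{\mathcal M}\|_\infty.$$
   Context: Setting. An MDP is $\mathcal M=(\mathcal S,\{0,1\},(P^a)_a,(r^a)_a)$, finite $\mathcal S$, row-stochastic $P^0,P^1$, rewards $r^0,r^1\in\mathbb R^{\mathcal S}$. A policy is a subset $\pi\subseteq\mathcal S$ of states where action 1 is played, inducing $P^\pi$, $r^\pi$; $\mathcal M$ is unichain if every $P^\pi$ has a single recurrent class. For $\lambda\in\mathbb R$, $\mathcal M(\lambda)$ has the same transitions and rewards $r^1-\lambda\mathbf 1$ (action 1), $r^0$ (action 0). For a unichain policy, bias $b^\pi(\lambda)$ (up to additive constant) solves $g^\pi\mathbf 1+b^\pi=r^\pi+P^\pi b^\pi$ in $\mathcal M(\lambda)$; activation advantage $\alpha^\pi_s(\lambda)=r^1_s-\lambda-r^0_s+(P^1_{s,\cdot}-P^0_{s,\cdot})\cdot b^\pi(\lambda)$. BO (bias optimal) policy in $\mathcal M(\lambda)$: gain optimal and bias-maximal among gain-optimal policies; for unichain MDPs, $\pi$ is BO iff $\alpha^\pi_s(\lambda)\ge0$ for $s\in\pi$,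 $\le0$ for $s\notin\pi$. $\alpha^*_s(\lambda)$ is $\alpha^\pi_s(\lambda)$ for any BO $\pi$. $\mathcal M$ indexable: for each $s$ there is $\lambda_s$ (Whittle index) with $\alpha^*_s(\lambda)>0$ for $\lambda<\lambda_s$, $<0$ for $\lambda>\lambda_s$. Hats denote objects in $\widehat{\mathcal M}=(\mathcal S,\{0,1\},(\hat P^a)_a,(r^a)_a)$ (and $\widehat{\mathcal M}(\lambda)$). $\|A\|_\infty=\max_s\sum_{s'}|A_{s,s'}|$; $\|\mathcal M-\widehat{\mathcal M}\|_\infty=\max_a\|P^a-\hat P^a\|_\infty$. Same support: $P^a_{s,s'}>0\iff\hat P^a_{s,s'}>0$. Diameter of unichain $P$ with recurrent class $\mathcal S_r$: $D(P)=\max_{s\in\mathcal S,s'\in\mathcal S_r}\mathbb E^P[\tau_{s,s'}]$. Assumption (A): $\|\mathcal M-\widehat{\mathcal M}\|_\infty\le\min\{1/\max_\pi D(P^\pi),\ \tfrac12\min\{|\lambda_s-\lambda_{s'}|:\lambda_s\ne\lambda_{s'}\}\}$. *)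

From HB Require Import structures.
From mathcomp Require Import all_boot all_order all_algebra.
From mathcomp Require Import reals.
Set Implicit Arguments. Unset Strict Implicit. Unset Printing Implicit Defensive.
Import Order.TTheory GRing.Theory Num.Theory.
Local Open Scope ring_scope.

Section MDP.
Variables (R : realType) (S : finType).

(* Transition kernels of a two-action MDP: action a : bool (false = 0, true = 1). *)
Definition kernel := bool -> S -> S -> R.
Definition rewards := bool -> S -> R.

Definition row_stochastic (M : S -> S -> R) : Prop :=
  (forall s s', 0 <= M s s') /\ (forall s, \sum_(s' : S) M s s' = 1).

Definition mdp_stochastic (P : kernel) : Prop := forall a, row_stochastic (P a).

(* A policy is a subset pi of states where action 1 is played. *)
Definition Ppol (P : kernel) (pi : {set S}) : S -> S -> R :=
  fun s s' => P (s \in pi) s s'.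

Definition rpol (r : rewards) (lam : R) (pi : {set S}) : S -> R :=
  fun s => if s \in pi then r true s - lam else r false s.

Definition edge (M : S -> S -> R) : rel S := fun s s' => 0 < M s s'.
Definition recurrent (M : S -> S -> R) (s : S) : Prop :=
  forall t, connect (edge M) s t -> connect (edge M) t s.
Definition unichain_chain (M : S -> S -> R) : Prop :=
  forall s t, recurrent M s -> recurrent M t -> connect (edge M) s t.
Definition unichain (P : kernel) : Prop :=
  forall pi : {set S}, unichain_chain (Ppol P pi).

Definition poisson (M : S -> S -> R) (rv : S -> R) (g : R) (b : S -> R) : Prop :=
  forall s, g + b s = rv s + \sum_(s' : S) M s s' * b s'.

Definition stationary (M : S -> S -> R) (mu : S -> R) : Prop :=
  (forall s, 0 <= mu s) /\ \sum_(s : S) mu s = 1 /\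
  (forall s', \sum_(s : S) mu s * M s s' = mu s').

(* gain g and (normalised) bias b: Poisson equation + mu.b = 0 for the
   stationary distribution mu (unique for unichain chains). *)
Definition gain_bias (M : S -> S -> R) (rv : S -> R) (g : R) (b : S -> R) : Prop :=
  poisson M rv g b /\ exists mu, stationary M mu /\ \sum_(s : S) mu s * b s = 0.

Definition bias_optimal (P : kernel) (r : rewards) (lam : R) (pi : {set S}) : Prop :=
  exists g b, gain_bias (Ppol P pi) (rpol r lam pi) g b /\
    forall (pi' : {set S}) g' b', gain_bias (Ppol P pi') (rpol r lam pi') g' b' ->
      g' <= g /\ (g' = g -> forall s, b' s <= b s).

Definition alpha (P : kernel) (r : rewards) (lam : R) (b : S -> R) (s : S) : R :=
  r true s - lam - r false s + \sum_(s' : S) (P true s s' - P false s s') * b s'.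

(* widx is the vector of Whittle indices of an indexable MDP:
   alpha*_s(lam) > 0 for lam < widx s and < 0 for lam > widx s, where
   alpha*_s(lam) = alpha^pi_s(lam) for any BO policy pi of M(lam). *)
Definition whittle_indices (P : kernel) (r : rewards) (widx : S -> R) : Prop :=
  forall (s : S) (lam : R) (pi : {set S}), bias_optimal P r lam pi ->
    forall g b, poisson (Ppol P pi) (rpol r lam pi) g b ->
      (lam < widx s -> 0 < alpha P r lam b s) /\
      (widx s < lam -> alpha P r lam b s < 0).

Definition indexable (P : kernel) (r : rewards) : Prop :=
  exists widx, whittle_indices P r widx.

Definition mx_inf_norm (A : S -> S -> R) : R :=
  \big[Num.max/0]_(s : S) \sum_(s' : S) `|A s s'|.

Definition mdp_dist (P Ph : kernel) : R :=
  Num.max (mx_inf_norm (fun s s' => P false s s' - Ph false s s'))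
          (mx_inf_norm (fun s s' => P true s s' - Ph true s s')).

Definition same_support (P Ph : kernel) : Prop :=
  forall a s s', (0 < P a s s') = (0 < Ph a s s').

(* expected hitting time m s = E[tau_{s,t}], tau = inf{k >= 0 : X_k = t},
   characterised by the first-step equations (unique solution when t is
   reachable from every state). *)
Definition hitting_times (M : S -> S -> R) (t : S) (m : S -> R) : Prop :=
  m t = 0 /\ forall s, s != t -> m s = 1 + \sum_(u : S) M s u * m u.

(* Assumption (A):
   d <= 1 / max_pi D(P^pi)  (written as d * E[tau_{s,s'}] <= 1 for all pi,
   all s and recurrent s'; this is the right reading also when D = 0), and
   d <= 1/2 min{|widx s - widx s'| : widx s <> widx s'}. *)
Definition assumptionA (P : kernel) (widx : S -> R) (Ph : kernel) : Prop :=
  (forall (pi : {set S}) (s t : S) (m : S -> R),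
      recurrent (Ppol P pi) t -> hitting_times (Ppol P pi) t m ->
      mdp_dist P Ph * m s <= 1) /\
  (forall s s', widx s != widx s' ->
      mdp_dist P Ph <= `|widx s - widx s'| / 2).

End MDP.

From HB Require Import structures.
From mathcomp Require Import all_boot all_order all_algebra.
From mathcomp Require Import reals.
From mathcomp Require Import ring lra.
Import Order.TTheory GRing.Theory Num.Theory.
Local Open Scope ring_scope.
Set Implicit Arguments. Unset Strict Implicit.

(* Normalised to vanish at a recurrent state [t], the bias of a policy
   solves first-step equations, so a maximum principle bounds it by the
   reward bound times the expected hitting times of [t]. The difference of
   the biases in M and M^ solves a Poisson equation of M^ whose reward
   (P^ - P) h is of size ||M - M^|| times that bound, and Assumption (A)
   makes twice the hitting times of M a supersolution of the first-step
   equations of M^; hence the bias difference is O(||M - M^||). The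
   activation advantage is affine in the bias, and the hitting times are
   bounded uniformly over the finitely many policies. *)


Section Sums.
Variables (R : realFieldType) (S : finType).
Implicit Types (D x : S -> R) (B : R).

Lemma exists_argmax x (s : S) : exists s0, forall u, x u <= x s0.
Proof.
by case: (@arg_maxP _ _ _ s predT x isT) => s0 _ Hs0; exists s0 => u; exact: Hs0.
Qed.

Lemma ler_norm_sum_mul D x B : (forall u, `|x u| <= B) ->
  `|\sum_u D u * x u| <= (\sum_u `|D u|) * B.
Proof.
move=> xB; apply: le_trans (ler_norm_sum _ _ _) _.
rewrite mulr_suml; apply: ler_sum => u _; rewrite normrM.
exact: ler_wpM2l.
Qed.

Lemma ler_norm_sum_mul_half D x B : \sum_u D u = 0 ->
  (forall u, 0 <= x u <= B) -> `|\sum_u D u * x u| <= (\sum_u `|D u|) * (B / 2).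
Proof.
move=> D0 xB.
have -> : \sum_u D u * x u = \sum_u D u * (x u - B / 2).
  under [RHS]eq_bigr do rewrite mulrBr.
  by rewrite sumrB -mulr_suml D0 mul0r subr0.
apply: ler_norm_sum_mul => u; rewrite ler_norml.
by have /andP[] := xB u => *; apply/andP; split; lra.
Qed.

End Sums.

Section StochasticMatrix.
Variables (R : realType) (S : finType) (K : S -> S -> R).
Hypotheses (K_ge0 : forall s u, 0 <= K s u) (K_sum1 : forall s, \sum_u K s u = 1).
Implicit Types (x y z phi : S -> R) (g : R).

Lemma mean_le_max z s s0 : (forall u, z u <= z s0) -> \sum_u K s u * z u <= z s0.
Proof.
move=> zmax; rewrite -[leRHS]mul1r -(K_sum1 s) mulr_suml.
by apply: ler_sum => u _; apply: ler_wpM2l.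
Qed.

Lemma poissonN y g x : poisson K y g x ->
  poisson K (fun u => - y u) (- g) (fun u => - x u).
Proof.
move=> Hx u; under eq_bigr do rewrite mulrN.
by rewrite sumrN; have := Hx u; lra.
Qed.

Lemma poisson_subc y g x c : poisson K y g x -> poisson K y g (fun u => x u - c).
Proof.
move=> Hx u; under eq_bigr do rewrite mulrBr.
by rewrite sumrB -mulr_suml K_sum1 mul1r; have := Hx u; lra.
Qed.

Lemma poisson_gain_le (s0 : S) y g x : poisson K y g x -> exists s, g <= y s.
Proof.
move=> Hx; have [s smax] := exists_argmax x s0; exists s.
by have := mean_le_max s smax; have := Hx s; lra.
Qed.

Lemma poisson_gain_bound (s0 : S) y g x B : poisson K y g x ->
  (forall u, `|y u| <= B) -> `|g| <= B.
Proof.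
move=> Hx yB; rewrite ler_norml.
have [s1 gy] := poisson_gain_le s0 Hx; have [s2 gNy] := poisson_gain_le s0 (poissonN Hx).
have := yB s1; have := yB s2; rewrite !ler_norml; lra.
Qed.

Variable t : S.
Hypothesis K_reach : forall s, connect (edge K) s t.

(* A maximum is propagated along every edge out of a state where
   [z <= K z]; following a path to [t] carries it to [z t <= 0]. *)
Lemma max_principle z : z t <= 0 ->
  (forall s, s != t -> z s <= \sum_u K s u * z u) -> forall s, z s <= 0.
Proof.
move=> zt zsub s; have [s0 zmax] := exists_argmax z s.
rewrite leNgt; apply/negP => zs_gt0.
have z0_gt0 : 0 < z s0 by apply: lt_le_trans zs_gt0 (zmax s).
have max_edge u v : z u = z s0 -> edge K u v -> z v = z s0.
  move=> zu euv; have ut : u != t.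
    by apply: contraTneq zt => ut; rewrite -ut zu -ltNge.
  have gap0 : \sum_w K u w * (z s0 - z w) = 0.
    apply/eqP; rewrite eq_le sumr_ge0 ?andbT; last first.
      by move=> w _; rewrite mulr_ge0 // subr_ge0.
    under eq_bigr do rewrite mulrBr.
    by rewrite sumrB -mulr_suml K_sum1 mul1r subr_le0 -zu zsub.
  have /(_ v isT)/eqP : forall w, true -> K u w * (z s0 - z w) = 0.
    by apply/psumr_eq0P => // w _; rewrite mulr_ge0 // subr_ge0.
  by rewrite mulf_eq0 subr_eq0 (gt_eqF euv) => /eqP ->.
have /connectP [p pth lst] := K_reach s0.
have path_max (q : seq S) u : path (edge K) u q -> z u = z s0 -> z (last u q) = z s0.
  elim: q u => [//|v q IH] u /= /andP [euv pq] zu.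
  exact/IH/(max_edge u).
by move: zt; rewrite lst path_max // leNgt z0_gt0.
Qed.

Lemma harmonic_eq0 z : z t = 0 ->
  (forall s, s != t -> z s = \sum_u K s u * z u) -> forall s, z s = 0.
Proof.
move=> zt zharm s; apply/eqP; rewrite eq_le; apply/andP; split.
  by apply: max_principle => [|u /zharm ->]; rewrite ?zt.
rewrite -oppr_le0; apply: (max_principle (z := fun u => - z u)) => [|u /zharm ->].
  by rewrite zt oppr0.
by rewrite -sumrN; apply: ler_sum => w _; rewrite mulrN.
Qed.

Lemma le_supersolution x phi F : 0 <= F -> x t <= 0 -> 0 <= phi t ->
  (forall s, s != t -> x s <= F + \sum_u K s u * x u) ->
  (forall s, s != t -> 1 + \sum_u K s u * phi u <= phi s) ->
  forall s, x s <= F * phi s.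
Proof.
move=> F0 xt phit xsub phisup s; rewrite -subr_le0.
apply: (max_principle (z := fun u => x u - F * phi u)) => [|u ut].
  by rewrite subr_le0 (le_trans xt) // mulr_ge0.
under eq_bigr do rewrite mulrBr mulrCA; rewrite sumrB -mulr_sumr.
have := ler_wpM2l F0 (phisup u ut); have := xsub u ut; lra.
Qed.

Lemma poisson_bias_bound y g x phi F : poisson K y g x -> x t = 0 ->
  (forall u, `|y u - g| <= F) -> 0 <= phi t ->
  (forall s, s != t -> 1 + \sum_u K s u * phi u <= phi s) ->
  forall s, `|x s| <= F * phi s.
Proof.
move=> Hx xt yF phit phisup.
have F0 : 0 <= F by apply: le_trans (yF t).
have bound x' y' g' : poisson K y' g' x' -> x' t = 0 -> (forall u, y' u - g' <= F) ->
    forall s, x' s <= F * phi s.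
  move=> Hx' x't y'F; apply: le_supersolution => // [|u _]; first by rewrite x't.
  by have := Hx' u; have := y'F u; lra.
move=> s; rewrite ler_norml lerNl; apply/andP; split.
- apply: (bound _ _ _ (poissonN Hx)) => [|u]; first by rewrite xt oppr0.
  by have := yF u; rewrite ler_norml; lra.
- apply: (bound _ _ _ Hx xt) => u.
  by have := yF u; rewrite ler_norml; lra.
Qed.

(* The first-step equations form a linear system whose homogeneous version
   only has the solution 0 by [harmonic_eq0], hence it is invertible. *)
Lemma hitting_times_exist : exists m, hitting_times K t m.
Proof.
pose A : 'M[R]_#|S| := \matrix_(i, j)
  ((i == j)%:R - (enum_val j != t)%:R * K (enum_val j) (enum_val i)).
have mulA (v : 'rV[R]_#|S|) s : (v *m A) 0 (enum_rank s) =
    v 0 (enum_rank s) - (s != t)%:R * \sum_u K s u * v 0 (enum_rank u).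
  rewrite mxE; under eq_bigr do rewrite !mxE enum_rankK mulrBr [_ * (_ * _)]mulrCA.
  rewrite sumrB -mulr_sumr (bigD1 (enum_rank s)) //= eqxx mulr1 big1 ?addr0.
    rewrite (reindex enum_rank) /=; last exact/onW_bij/enum_rank_bij.
    by under eq_bigr do rewrite enum_rankK mulrC.
  by move=> i /negbTE ->; rewrite mulr0.
have A_unit : A \in unitmx.
  rewrite -row_free_unit -kermx_eq0; apply/eqP/row_matrixP => i.
  rewrite row0; set v := row i (kermx A).
  have vA0 : v *m A = 0 by rewrite /v -row_mul mulmx_ker row0.
  have v0 : forall s, v 0 (enum_rank s) = 0.
    apply: harmonic_eq0 => [|s st].
      by have := mulA v t; rewrite vA0 mxE eqxx mul0r subr0 => <-.
    by have := mulA v s; rewrite vA0 mxE st mul1r => /eqP; rewrite eq_sym subr_eq0 => /eqP.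
  by apply/rowP => j; have := v0 (enum_val j); rewrite enum_valK !mxE.
pose v := (\row_j (enum_val j != t)%:R) *m invmx A.
have vA : v *m A = \row_j (enum_val j != t)%:R by rewrite /v mulmxKV.
exists (fun s => v 0 (enum_rank s)); split.
  by have := mulA v t; rewrite vA mxE enum_rankK eqxx mul0r subr0 => <-.
move=> s st; have := mulA v s; rewrite vA mxE enum_rankK st mul1r.
by move=> /eqP; rewrite eq_sym subr_eq addrC => /eqP.
Qed.

Lemma hitting_times_ge0 m : hitting_times K t m -> forall s, 0 <= m s.
Proof.
case=> mt mstep s; rewrite -oppr_le0.
apply: (max_principle (z := fun u => - m u)) => [|u /mstep ->].
  by rewrite mt oppr0.
have -> : \sum_w K u w * - m w = - \sum_w K u w * m w.
  by rewrite -sumrN; apply: eq_bigr => w _; rewrite mulrN.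
lra.
Qed.

End StochasticMatrix.

(* Assumption (A) makes [2 m] a supersolution of the first-step equations
   of the perturbed chain: the perturbation costs at most [d max m / 2 <= 1/2]
   per step, since the rows of [N - M] sum to zero. *)
Lemma hitting_times_perturb (R : realType) (S : finType) (M N : S -> S -> R)
    t m (d : R) :
  (forall s, \sum_u M s u = 1) -> (forall s, \sum_u N s u = 1) ->
  hitting_times M t m -> (forall s, 0 <= m s) -> (forall s, d * m s <= 1) ->
  (forall s, \sum_u `|N s u - M s u| <= d) ->
  forall s, s != t -> 1 + \sum_u N s u * (2 * m u) <= 2 * m s.
Proof.
move=> M1 N1 [_ mstep] m0 dm NM s st.
have [smax mmax] := exists_argmax m s.
have split_N : \sum_u N s u * m u =
    \sum_u M s u * m u + \sum_u (N s u - M s u) * m u.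
  by rewrite -big_split; apply: eq_bigr => u _ /=; rewrite mulrBl addrC subrK.
have dev : `|\sum_u (N s u - M s u) * m u| <= d * (m smax / 2).
  apply: le_trans (ler_norm_sum_mul_half (B := m smax) _ _) _.
  - by rewrite sumrB N1 M1 subrr.
  - by move=> u; rewrite m0 mmax.
  by apply: ler_wpM2r (NM s); rewrite divr_ge0.
have -> : \sum_u N s u * (2 * m u) = 2 * \sum_u N s u * m u.
  by rewrite mulr_sumr; apply: eq_bigr => u _; rewrite mulrCA.
move: dev; rewrite split_N (mstep s st) ler_norml.
by have := dm smax; lra.
Qed.

(* A state reachable from [s] with the fewest reachable states is recurrent. *)
Lemma connect_recurrent (S : finType) (e : rel S) s :
  exists t, connect e s t /\ forall u, connect e t u -> connect e u t.
Proof.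
pose reach u := [set w | connect e u w].
case: (arg_minnP (fun u => #|reach u|) (connect0 e s)) => t st tmin.
exists t; split=> // u tu.
have sub : reach u \subset reach t.
  by apply/subsetP => w; rewrite !inE; apply: connect_trans tu.
have tu_sub : reach t \subset reach u.
  by rewrite -(geq_leqif (subset_leqif_card sub)) tmin //; apply: connect_trans st tu.
by have := subsetP tu_sub t; rewrite !inE connect0 => ->.
Qed.

Lemma poisson_sub (R : realType) (S : finType) (M N : S -> S -> R) y g g' x x' :
  poisson M y g x -> poisson N y g' x' ->
  poisson N (fun s => \sum_u (N s u - M s u) * x u) (g' - g) (fun s => x' s - x s).
Proof.
move=> Hx Hx' s /=.
have -> : \sum_u (N s u - M s u) * x u + \sum_u N s u * (x' u - x u) =
    \sum_u N s u * x' u - \sum_u M s u * x u.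
  by rewrite -sumrB -big_split; apply: eq_bigr => u _ /=; ring.
by have := Hx s; have := Hx' s; lra.
Qed.

Section Kernels.
Variables (R : realType) (S : finType).
Implicit Types (P Q : kernel R S) (r : rewards R S) (pi : {set S}) (b : S -> R).

Lemma Ppol_stochastic P pi : mdp_stochastic P -> row_stochastic (Ppol P pi).
Proof.
by move=> Pst; split=> [s u|s]; have [P0 P1] := Pst (s \in pi); [exact: P0|exact: P1].
Qed.

Lemma row_dist_le P Q a s : \sum_u `|P a s u - Q a s u| <= mdp_dist P Q.
Proof.
rewrite /mdp_dist /mx_inf_norm le_max.
by case: a; rewrite (le_bigmax _ (fun s => \sum_u `|_ s u - _ s u|)) ?orbT.
Qed.

Lemma Ppol_dist_le P Q pi s :
  \sum_u `|Ppol Q pi s u - Ppol P pi s u| <= mdp_dist P Q.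
Proof.
by rewrite /Ppol; under eq_bigr do rewrite distrC; apply: row_dist_le.
Qed.

Lemma mdp_dist_ge0 P Q : 0 <= mdp_dist P Q.
Proof. by rewrite /mdp_dist /mx_inf_norm le_max bigmax_ge_id. Qed.

Lemma same_support_connect P Q pi : same_support P Q ->
  connect (edge (Ppol P pi)) =2 connect (edge (Ppol Q pi)).
Proof. by move=> PQ; apply: eq_connect => s u; rewrite /edge /Ppol PQ. Qed.

Lemma unichain_reach_recurrent (M : S -> S -> R) (s0 : S) : unichain_chain M ->
  exists t, recurrent M t /\ forall s, connect (edge M) s t.
Proof.
move=> Muni; have [t [_ trec]] := connect_recurrent (edge M) s0.
exists t; split => // s; have [u [su urec]] := connect_recurrent (edge M) s.
exact: connect_trans su (Muni u t urec trec).
Qed.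

Lemma alpha_subc P r lam b c s : mdp_stochastic P ->
  alpha P r lam (fun u => b u - c) s = alpha P r lam b s.
Proof.
move=> Pst; rewrite /alpha; congr (_ + _).
under eq_bigr do rewrite mulrBr; rewrite sumrB -mulr_suml sumrB.
by have [_ ->] := Pst true; have [_ ->] := Pst false; rewrite subrr mul0r subr0.
Qed.

Lemma alpha_sub P Q r lam b b' s :
  alpha P r lam b s - alpha Q r lam b' s =
  \sum_u ((P true s u - Q true s u) - (P false s u - Q false s u)) * b u -
  \sum_u (Q true s u - Q false s u) * (b' u - b u).
Proof.
rewrite /alpha -sumrB.
transitivity (\sum_u ((P true s u - P false s u) * b u - (Q true s u - Q false s u) * b' u)).
  by rewrite sumrB; ring.
by apply: eq_bigr => u _; ring.
Qed.

Lemma rpol_bound r (a b lam : R) pi s : a <= lam <= b ->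
  `|rpol r lam pi s| <= \sum_u (`|r true u| + `|r false u|) + `|a| + `|b|.
Proof.
move=> /andP [alam lamb].
have lam_le : `|lam| <= `|a| + `|b|.
  rewrite ler_norml; have := ler_norm (- a); rewrite normrN.
  have := ler_norm b; have := normr_ge0 a; have := normr_ge0 b; lra.
have r_le : `|r true s| + `|r false s| <= \sum_u (`|r true u| + `|r false u|).
  by rewrite (bigD1 s) //= lerDl; apply: sumr_ge0 => u _; rewrite addr_ge0.
rewrite /rpol; case: (s \in pi).
  have := ler_normB (r true s) lam; have := normr_ge0 (r false s); lra.
have := normr_ge0 (r true s); have := normr_ge0 a; have := normr_ge0 b; lra.
Qed.

End Kernels.

Lemma unichain_hitting_bound (R : realType) (S : finType) (P : kernel R S) (s0 : S) :
  mdp_stochastic P -> unichain P -> exists K : R, forall pi : {set S}, exists t m,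
    [/\ recurrent (Ppol P pi) t, forall s, connect (edge (Ppol P pi)) s t,
        hitting_times (Ppol P pi) t m, forall s, 0 <= m s & forall s, m s <= K].
Proof.
move=> Pst Puni.
have hit pi : exists tm : S * (S -> R),
    [/\ recurrent (Ppol P pi) tm.1, forall s, connect (edge (Ppol P pi)) s tm.1,
        hitting_times (Ppol P pi) tm.1 tm.2 & forall s, 0 <= tm.2 s].
  have [M0 M1] := Ppol_stochastic pi Pst.
  have [t [trec reach]] := unichain_reach_recurrent s0 (Puni pi).
  have [m hm] := hitting_times_exist M0 M1 reach.
  by exists (t, m); split => //; apply: hitting_times_ge0 hm.
have [tm Htm] := fin_all_exists hit.
exists (\sum_pi \sum_s (tm pi).2 s) => pi.
have [trec reach hm m0] := Htm pi; exists (tm pi).1, (tm pi).2; split => // s.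
rewrite (bigD1 pi) //= (bigD1 s) //= -addrA lerDl addr_ge0 ?sumr_ge0 //.
by move=> pi' _; apply: sumr_ge0 => u _; have [] := Htm pi'.
Qed.

Section Perturbation.
Variables (R : realType) (S : finType) (P Ph : kernel R S) (r : rewards R S).
Variables (lam B K : R) (pi : {set S}) (t : S) (m : S -> R).
Hypotheses (Pst : mdp_stochastic P) (Phst : mdp_stochastic Ph).
Hypothesis support : same_support P Ph.
Hypothesis reach : forall s, connect (edge (Ppol P pi)) s t.
Hypothesis hm : hitting_times (Ppol P pi) t m.
Hypotheses (m_ge0 : forall s, 0 <= m s) (m_le : forall s, m s <= K).
Hypothesis dist_hitting : forall s, mdp_dist P Ph * m s <= 1.
Hypothesis r_bound : forall s, `|rpol r lam pi s| <= B.

Local Notation M := (Ppol P pi).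
Local Notation N := (Ppol Ph pi).
Local Notation d := (mdp_dist P Ph).
Local Notation rv := (rpol r lam pi).

Lemma bias_bound g h : poisson M rv g h -> forall s, `|h s - h t| <= 2 * B * K.
Proof.
move=> Hh s; have [M0 M1] := Ppol_stochastic pi Pst.
have Hh' := poisson_subc M1 (h t) Hh.
have gB := poisson_gain_bound M0 M1 t Hh r_bound.
have rg u : `|rv u - g| <= 2 * B.
  by apply: le_trans (ler_normB _ _) _; have := r_bound u; lra.
have B0 : 0 <= B by apply: le_trans (r_bound t).
apply: le_trans (poisson_bias_bound (phi := m) M0 M1 reach Hh' _ rg _ _ s) _.
- by rewrite subrr.
- by case: hm => ->.
- by move=> u ut; case: hm => _ /(_ u ut) ->.
by apply: ler_wpM2l; rewrite ?mulr_ge0.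
Qed.

Lemma bias_perturbation g h gh hh :
  poisson M rv g h -> poisson N rv gh hh ->
  forall s, `|(hh s - hh t) - (h s - h t)| <= 4 * d * (2 * B * K) * K.
Proof.
move=> Hh Hhh s; have [M0 M1] := Ppol_stochastic pi Pst.
have [N0 N1] := Ppol_stochastic pi Phst.
have N_reach u : connect (edge N) u t by rewrite -(same_support_connect pi support).
set H := 2 * B * K; have hH := bias_bound Hh.
have H0 : 0 <= H by apply: le_trans (hH t); apply: normr_ge0.
have d0 : 0 <= d := mdp_dist_ge0 P Ph.
have Hx := poisson_sub (poisson_subc M1 (h t) Hh) (poisson_subc N1 (hh t) Hhh).
have yH u : `|\sum_w (N u w - M u w) * (h w - h t)| <= d * H.
  by apply: le_trans (ler_norm_sum_mul _ hH) _; apply: ler_wpM2r (Ppol_dist_le _ _ _ _).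
have gH := poisson_gain_bound N0 N1 t Hx yH.
have super := hitting_times_perturb M1 N1 hm m_ge0 dist_hitting (Ppol_dist_le P Ph pi).
apply: le_trans (poisson_bias_bound (F := 2 * (d * H)) (phi := fun u => 2 * m u)
  N0 N1 N_reach Hx _ _ _ super s) _.
- by rewrite /= !subrr.
- by move=> u; apply: le_trans (ler_normB _ _) _; rewrite mulr_natl mulr2n lerD.
- by case: hm => ->; rewrite mulr0.
by have := ler_wpM2l (mulr_ge0 d0 H0) (m_le s); lra.
Qed.

Lemma alpha_perturbation g h gh hh s :
  poisson M rv g h -> poisson N rv gh hh ->
  `|alpha P r lam h s - alpha Ph r lam hh s| <= 4 * B * K * (1 + 4 * K) * d.
Proof.
move=> Hh Hhh; set H := 2 * B * K.
rewrite -(alpha_subc _ _ _ (h t) _ Pst) -(alpha_subc _ _ _ (hh t) _ Phst) alpha_sub.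
have l1_diff : \sum_u `|(P true s u - Ph true s u) - (P false s u - Ph false s u)| <= 2 * d.
  apply: le_trans (_ : \sum_u (`|P true s u - Ph true s u| + `|P false s u - Ph false s u|) <= _).
    by apply: ler_sum => u _; apply: ler_normB.
  by rewrite big_split /= mulr_natl mulr2n lerD ?row_dist_le.
have l1_Ph : \sum_u `|Ph true s u - Ph false s u| <= 2.
  have [Ph1_ge0 Ph1] := Phst true; have [Ph0_ge0 Ph0] := Phst false.
  rewrite -[2]/(1 + 1) -{1}(Ph1 s) -(Ph0 s) -big_split /=.
  by apply: ler_sum => u _; apply: le_trans (ler_normB _ _) _; rewrite !ger0_norm.
have H0 : 0 <= H by apply: le_trans (bias_bound Hh t); apply: normr_ge0.
have d0 : 0 <= d := mdp_dist_ge0 P Ph.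
have K0 : 0 <= K := le_trans (m_ge0 t) (m_le t).
have -> : 4 * B * K * (1 + 4 * K) * d = (2 * d) * H + 2 * (4 * d * H * K).
  by rewrite /H; ring.
apply: le_trans (ler_normB _ _) _; apply: lerD.
  apply: le_trans (ler_norm_sum_mul _ (bias_bound Hh)) _.
  exact: ler_wpM2r.
apply: le_trans (ler_norm_sum_mul _ (bias_perturbation Hh Hhh)) _.
apply: ler_wpM2r => //.
by apply: mulr_ge0 K0; apply: mulr_ge0 H0; apply: mulr_ge0.
Qed.

End Perturbation.

Theorem mainTheorem6 (R : realType) (S : finType) (P : kernel R S) (r : rewards R S)
    (widx : S -> R) :
  mdp_stochastic P -> unichain P -> whittle_indices P r widx ->
  forall a b : R, exists c : R,
    forall Ph : kernel R S,
      mdp_stochastic Ph -> same_support P Ph -> assumptionA P widx Ph ->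
      forall (s : S) (pi : {set S}) (lam : R), a <= lam <= b ->
      forall (g : R) (h : S -> R) (gh : R) (hh : S -> R),
        poisson (Ppol P pi) (rpol r lam pi) g h ->
        poisson (Ppol Ph pi) (rpol r lam pi) gh hh ->
        `|alpha P r lam h s - alpha Ph r lam hh s| <= c * mdp_dist P Ph.
Proof.
move=> Pst Puni _ a b.
case: (pickP (@predT S)) => [s0 _|S0]; last by exists 0 => Ph _ _ _ s; have := S0 s.
have [K HK] := unichain_hitting_bound s0 Pst Puni.
pose B := \sum_u (`|r true u| + `|r false u|) + `|a| + `|b|.
exists (4 * B * K * (1 + 4 * K)).
move=> Ph Phst support [dist_hitting _] s pi lam ablam g h gh hh Hh Hhh.
have [t [m [trec reach hm m_ge0 m_le]]] := HK pi.
apply: (alpha_perturbation (B := B) Pst Phst support reach hm m_ge0 m_le _ _ s Hh Hhh).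
- by move=> u; apply: dist_hitting trec hm.
- by move=> u; apply: rpol_bound.
Qed.
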